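(* Let \(m\) be a positive integer that is not a perfect square. Let \(\alpha_1,\alpha_2\in\mathbb N[\sqrt m]\setminus\{0\}\) be such that \((\alpha_1,\alpha_2)\) spans \(1\) in \(\mathbb Z[\sqrt m]\), and suppose that at least one of \(\alpha_1,\alpha_2\) has rational part \(0\) or irrational part \(0\). Then \[Frob(\alpha_1,\alpha_2)=(\alpha_1-1)(\alpha_2-1)(1+\sqrt m)+\mathbb N[\sqrt m].\]
   Context: \(\mathbb N\) denotes the set of non-negative integers. \(\mathbb Z[\sqrt m]=\{u+v\sqrt m\mid u,v\in\mathbb Z\}\) and \(\mathbb N[\sqrt m]=\{u+v\sqrt m\mid u,v\in\mathbb N\}\); every element of \(\mathbb Z[\sqrt m]\) is uniquely \(u+v\sqrt m\) with \(u,v\in\mathbb Z\), and \(u\), \(v\) are its rational and irrational parts. A pair \((\alpha_1,\alpha_2)\) spans \(1\) in \(\mathbb Z[\sqrt m]\) if \(\lambda_1\alpha_1+\lambda_2\alpha_2=1\) for some \(\lambda_1,\lambda_2\in\mathbb Z[\sqrt m]\). \(SG(\alpha_1,\alpha_2)=\{\lambda_1\alpha_1+\lambda_2\alpha_2\mid \lambda_1,\lambda_2\in\mathbb N[\sqrt m]\}\) and \(Frob(\alpha_1,\alpha_2)=\{w\in\mathbb Z[\sqrt m]\mid w+\mathbb N[\sqrt m]\subseteq SG(\alpha_1,\alpha_2)\}\). *)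

(* Elements of Z[sqrt m] are represented by their (unique,
   since m is not a perfect square) coordinates (u, v) : int * int,
   meaning u + v sqrt m. *)
From mathcomp Require Import all_boot all_order all_algebra.
Set Implicit Arguments. Unset Strict Implicit. Unset Printing Implicit Defensive.
Import Order.TTheory GRing.Theory Num.Theory.
Local Open Scope ring_scope.

Definition zsqrt := (int * int)%type.

Definition zs_add (a b : zsqrt) : zsqrt := (a.1 + b.1, a.2 + b.2).
Definition zs_opp (a : zsqrt) : zsqrt := (- a.1, - a.2).
Definition zs_sub (a b : zsqrt) : zsqrt := zs_add a (zs_opp b).
Definition zs_mul (m : int) (a b : zsqrt) : zsqrt :=
  (a.1 * b.1 + m * (a.2 * b.2), a.1 * b.2 + a.2 * b.1).
Definition zs_one : zsqrt := (1, 0).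
Definition zs_zero : zsqrt := (0, 0).
Definition zs_sqrt : zsqrt := (0, 1).

Definition inN (a : zsqrt) : Prop := 0 <= a.1 /\ 0 <= a.2.

Definition spans1 (m : int) (a1 a2 : zsqrt) : Prop :=
  exists l1 l2 : zsqrt, zs_add (zs_mul m l1 a1) (zs_mul m l2 a2) = zs_one.

Definition inSG (m : int) (a1 a2 w : zsqrt) : Prop :=
  exists l1 l2 : zsqrt, inN l1 /\ inN l2 /\
    w = zs_add (zs_mul m l1 a1) (zs_mul m l2 a2).

Definition inFrob (m : int) (a1 a2 w : zsqrt) : Prop :=
  forall n : zsqrt, inN n -> inSG m a1 a2 (zs_add w n).

(* When [a1] lies on an axis, the principal ideal a1 Z[sqrt m] is the grid
   d.1 Z x d.2 Z with d = a1 (1 + sqrt m), and a quotient by [a1] of an element of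
   N[sqrt m] lies in N[sqrt m].  As [a2] is invertible modulo [a1], an element w
   of SG(a1, a2) is w = mu a1 + r a2 with r a reduced residue in the box between 0
   and c = d - 1 - sqrt m.  The extreme residue r = c yields the threshold
   c (a2 - 1) = (a1 - 1) (a2 - 1) (1 + sqrt m) of the Frobenius set; the case of
   [a2] on an axis follows by symmetry. *)

From HB Require Import structures.
From mathcomp Require Import all_boot all_order all_algebra.
From mathcomp Require Import ring zify.
Set Implicit Arguments. Unset Strict Implicit. Unset Printing Implicit Defensive.
Import Order.TTheory GRing.Theory Num.Theory.
Local Open Scope ring_scope.

Lemma dvdz_subr_mod (x d : int) : (d %| x - (x %% d)%Z)%Z.
Proof. by apply/dvdzP; exists (x %/ d)%Z; rewrite {1}(divz_eq x d) addrK. Qed.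

Lemma dvdz_ge0 (d y : int) : 0 < d -> (d %| y)%Z -> 0 <= y + (d - 1) -> 0 <= y.
Proof.
move=> d_gt0 /dvdzP[k ->] y_ge; rewrite pmulr_lge0 //.
have : 0 < (k + 1) * d by rewrite mulrDl mul1r; lia.
by rewrite pmulr_lgt0 //; lia.
Qed.

(* [zsqrt] = [int * int] already carries the componentwise ring structure; the
   alias [zring m] carries the multiplication of Z[sqrt m]. *)
Definition zring (m : int) : Type := zsqrt.

Section ZsqrtRing.
Variable m : int.

HB.instance Definition _ := GRing.Zmodule.copy (zring m) zsqrt.

Lemma zs_mulA : associative (zs_mul m).
Proof. by case=> ? ? [? ?] [? ?]; rewrite /zs_mul; congr pair => /=; ring. Qed.

Lemma zs_mulC : commutative (zs_mul m).
Proof. by case=> ? ? [? ?]; rewrite /zs_mul; congr pair => /=; ring. Qed.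

Lemma zs_mul1 : left_id zs_one (zs_mul m).
Proof. by case=> ? ?; rewrite /zs_mul /zs_one; congr pair => /=; ring. Qed.

Lemma zs_mulDl : left_distributive (zs_mul m) (+%R : zring m -> _ -> _).
Proof. by case=> ? ? [? ?] [? ?]; rewrite /zs_mul; congr pair => /=; ring. Qed.

Lemma zs_one_neq0 : (zs_one : zring m) != 0. Proof. by []. Qed.

HB.instance Definition _ := GRing.Zmodule_isComNzRing.Build (zring m)
  zs_mulA zs_mulC zs_mul1 zs_mulDl zs_one_neq0.

Lemma inN_add (x y : zring m) : inN x -> inN y -> inN (x + y).
Proof. by case: x y => [? ?] [? ?]; rewrite /inN /= => -[? ?] [? ?]; split; lia. Qed.

Lemma inN_mul (x y : zring m) : 0 <= m -> inN x -> inN y -> inN (x * y).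
Proof. by case: x y => [? ?] [? ?]; rewrite /inN /= => ? [? ?] [? ?]; split; nia. Qed.

Lemma spans1P (a1 a2 : zring m) :
  spans1 m a1 a2 -> exists l1 l2 : zring m, l1 * a1 + l2 * a2 = 1.
Proof. by case=> l1 [l2 E]; exists l1, l2. Qed.

Lemma spans1_sym (a1 a2 : zring m) : spans1 m a1 a2 -> spans1 m a2 a1.
Proof. by move=> /spans1P[l1 [l2 E]]; exists l2, l1; exact: etrans (addrC _ _) E. Qed.

Lemma inSGP (a1 a2 x : zring m) : inSG m a1 a2 x <->
  exists mu la : zring m, [/\ inN mu, inN la & x = mu * a1 + la * a2].
Proof. by split=> [[mu [la [? [? ?]]]] | [mu [la [? ? ?]]]]; exists mu, la. Qed.

Lemma inFrob_sym (a1 a2 w : zring m) : inFrob m a1 a2 w -> inFrob m a2 a1 w.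
Proof.
move=> wF n nN; have [l1 [l2 [l1N [l2N E]]]] := wF n nN.
by exists l2, l1; do 2!split=> //; rewrite E; apply: addrC.
Qed.

End ZsqrtRing.

Section Grid.
Variable m : int.

Definition on_grid (d x : zring m) : bool := (d.1 %| x.1)%Z && (d.2 %| x.2)%Z.

Definition grid_mod (d x : zring m) : zring m := ((x.1 %% d.1)%Z, (x.2 %% d.2)%Z).

Definition grid_corner (d : zring m) : zring m := d - (1 + (zs_sqrt : zring m)).

Lemma on_gridB (d x y : zring m) : on_grid d x -> on_grid d y -> on_grid d (x - y).
Proof. by move=> /andP[x1 x2] /andP[y1 y2]; apply/andP; split; apply: rpredB. Qed.

Lemma on_grid_subr_mod (d x : zring m) : on_grid d (x - grid_mod d x).
Proof. by apply/andP; split; apply: dvdz_subr_mod. Qed.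

Section PositiveGrid.
Variable d : zring m.
Hypotheses (d1_gt0 : 0 < d.1) (d2_gt0 : 0 < d.2).

Lemma grid_mod_ge0 x : inN (grid_mod d x).
Proof. by split; apply: modz_ge0; lia. Qed.

Lemma grid_mod_le_corner x : inN (grid_corner d - grid_mod d x).
Proof.
have lt1 := ltz_pmod x.1 d1_gt0; have lt2 := ltz_pmod x.2 d2_gt0.
by rewrite /inN /=; split; lia.
Qed.

Lemma on_grid_ge0 x : on_grid d x -> inN (x + grid_corner d) -> inN x.
Proof.
case/andP=> dvd1 dvd2; rewrite /inN /= addr0 add0r => -[x1_ge x2_ge].
by split; [exact: dvdz_ge0 dvd1 x1_ge | exact: dvdz_ge0 dvd2 x2_ge].
Qed.

End PositiveGrid.

End Grid.

Section GridGenerator.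
Variables (m : int) (a1 a2 d : zring m).
Hypotheses (m_ge0 : 0 <= m) (d1_gt0 : 0 < d.1) (d2_gt0 : 0 < d.2).
Hypothesis on_gridP : forall x, on_grid d x <-> exists mu, x = mu * a1.
Hypothesis inN_mulr_a1 : forall mu, inN (mu * a1) -> inN mu.
Hypotheses (a1N : inN a1) (a2N : inN a2) (span : spans1 m a1 a2).

Local Notation c := (grid_corner d).

Lemma on_grid_mulr_a2 x : on_grid d (x * a2) -> on_grid d x.
Proof.
have [l1 [l2 E]] := spans1P span.
move=> /on_gridP[rho Erho]; apply/on_gridP; exists (x * l1 + l2 * rho).
by rewrite -[LHS]mulr1 -E mulrDr (mulrCA x l2) Erho; ring.
Qed.

Lemma inFrob_of_corner (w : zring m) : inN (w - c * (a2 - 1)) -> inFrob m a1 a2 w.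
Proof.
move=> wN n nN; have [l1 [l2 E]] := spans1P span.
(* [l2] inverts [a2] modulo [a1], so [r] is the reduced residue of (w + n) / a2. *)
have [nu Enu] := (on_gridP _).1 (on_grid_subr_mod d ((w + n) * l2)).
set r := grid_mod d _ in Enu.
pose mu := (w + n) * l1 + nu * a2.
have Emu : w + n - r * a2 = mu * a1.
  have -> : mu * a1 = (w + n) * l1 * a1 + nu * a1 * a2 by rewrite /mu; ring.
  by rewrite -Enu -{1}[w + n]mulr1 -E; ring.
have xN : inN (w + n - r * a2).
  apply: (on_grid_ge0 d1_gt0 d2_gt0); first by apply/on_gridP; exists mu.
  have -> : w + n - r * a2 + c = (c - r) * a2 + (w - c * (a2 - 1)) + n by ring.
  by do 2?apply: inN_add => //; apply: inN_mul => //; apply: grid_mod_le_corner.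
apply/inSGP; exists mu, r; split.
- by apply: inN_mulr_a1; rewrite -Emu.
- exact: grid_mod_ge0.
- by apply/eqP; rewrite -subr_eq Emu.
Qed.

Lemma corner_of_inFrob (w : zring m) : inFrob m a1 a2 w -> inN (w - c * (a2 - 1)).
Proof.
(* [n] makes [w + n] congruent to [c * a2]; then [la] is congruent to [c], and
   [la >= 0] forces [la >= c]. *)
move=> wF; have n_grid := on_grid_subr_mod d (c * a2 - w).
set n := grid_mod d _ in n_grid.
have /inSGP[mu [la [muN laN E0]]] := wF n (grid_mod_ge0 d1_gt0 d2_gt0 _).
have E : w + n = mu * a1 + la * a2 := E0.
have la_grid : on_grid d (la - c).
  apply: on_grid_mulr_a2.
  have -> : (la - c) * a2 = - mu * a1 - (c * a2 - w - n).
    have la_a2 : la * a2 = w + n - mu * a1 by rewrite E; ring.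
    by rewrite mulrBl la_a2; ring.
  by apply: on_gridB => //; apply/on_gridP; exists (- mu).
have la_cN : inN (la - c) by apply: (on_grid_ge0 d1_gt0 d2_gt0) => //; rewrite subrK.
have -> : w - c * (a2 - 1) = mu * a1 + (la - c) * a2 + (c - n).
  by rewrite -[w](addrK n) E; ring.
apply: inN_add; last exact: grid_mod_le_corner.
by apply: inN_add; apply: inN_mul.
Qed.

Lemma inFrob_corner (w : zring m) : inFrob m a1 a2 w <-> inN (w - c * (a2 - 1)).
Proof. by split; [apply: corner_of_inFrob | apply: inFrob_of_corner]. Qed.

End GridGenerator.

Section AxisGenerator.
Variables (m b : int) (a : zring m).
Hypotheses (m_gt0 : 0 < m) (b_gt0 : 0 < b) (a_axis : a = (b, 0) \/ a = (0, b)).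

(* [d] is [(b, b)] when [a = b] and [(m * b, b)] when [a = b sqrt m]. *)
Local Notation d := (a * (1 + (zs_sqrt : zring m))).

Lemma axis_grid_gt0 : 0 < d.1 /\ 0 < d.2.
Proof. by case: a_axis => ->; rewrite /=; split; nia. Qed.

Lemma on_grid_axisP x : on_grid d x <-> exists mu, x = mu * a.
Proof.
case: x => x1 x2; rewrite /on_grid; case: a_axis => -> /=; split.
- by case/andP=> /dvdzP[k1 ->] /dvdzP[k2 ->]; exists (k1, k2); congr pair => /=; ring.
- by case=> -[u v] [-> ->]; apply/andP; split; apply/dvdzP; [exists u | exists v]; ring.
- by case/andP=> /dvdzP[k1 ->] /dvdzP[k2 ->]; exists (k2, k1); congr pair => /=; ring.
- by case=> -[u v] [-> ->]; apply/andP; split; apply/dvdzP; [exists v | exists u]; ring.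
Qed.

Lemma inN_mulr_axis mu : inN (mu * a) -> inN mu.
Proof. by case: mu a_axis => u v [] ->; rewrite /inN /= => -[? ?]; split; nia. Qed.

End AxisGenerator.

Lemma axis_coordinate (m : int) (a : zring m) : inN a -> a <> 0 -> a.1 = 0 \/ a.2 = 0 ->
  exists2 b, 0 < b & a = (b, 0) \/ a = (0, b).
Proof.
case: a => x y [/= x_ge0 y_ge0] a_neq0 [/= x0 | /= y0]; subst.
- have y_neq0 : y <> 0 by move=> y0; apply: a_neq0; rewrite y0.
  by exists y; [lia | right].
- have x_neq0 : x <> 0 by move=> x0; apply: a_neq0; rewrite x0.
  by exists x; [lia | left].
Qed.

Lemma inFrob_axis (m : int) (a1 a2 w : zring m) :
  0 < m -> inN a1 -> a1 <> 0 -> inN a2 -> spans1 m a1 a2 -> a1.1 = 0 \/ a1.2 = 0 ->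
  inFrob m a1 a2 w <->
  exists n, inN n /\ w = (a1 - 1) * (a2 - 1) * (1 + (zs_sqrt : zring m)) + n.
Proof.
move=> m_gt0 a1N a1_neq0 a2N span axis.
have [b b_gt0 a1_axis] := axis_coordinate a1N a1_neq0 axis.
have [d1_gt0 d2_gt0] := axis_grid_gt0 m_gt0 b_gt0 a1_axis.
apply: iff_trans (inFrob_corner (ltW m_gt0) d1_gt0 d2_gt0
  (on_grid_axisP a1_axis) (@inN_mulr_axis _ _ _ m_gt0 b_gt0 a1_axis) a1N a2N span w) _.
set T := (a1 - 1) * (a2 - 1) * _.
have -> : grid_corner (a1 * (1 + (zs_sqrt : zring m))) * (a2 - 1) = T.
  by rewrite /T /grid_corner; ring.
by split=> [wN | [n [nN ->]]]; [exists (w - T); split=> //; ring | rewrite addrC addKr].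
Qed.

Theorem corollary3 (m : nat) (a1 a2 : zsqrt) :
  (0 < m)%N ->
  (forall k : nat, (k * k)%N <> m) ->
  inN a1 -> a1 <> zs_zero ->
  inN a2 -> a2 <> zs_zero ->
  spans1 (m%:Z) a1 a2 ->
  (a1.1 = 0 \/ a1.2 = 0 \/ a2.1 = 0 \/ a2.2 = 0) ->
  forall w : zsqrt,
    inFrob (m%:Z) a1 a2 w <->
    exists n : zsqrt, inN n /\
      w = zs_add (zs_mul (m%:Z) (zs_mul (m%:Z) (zs_sub a1 zs_one) (zs_sub a2 zs_one))
                                (zs_add zs_one zs_sqrt)) n.
Proof.
(* Non-squareness of [m] is already built into the coordinate representation. *)
move=> m_gt0 _ a1N a1_neq0 a2N a2_neq0 span axis w.
have mz_gt0 : 0 < m%:Z by rewrite ltz_nat.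
have [axis1 | axis2] : (a1.1 = 0 \/ a1.2 = 0) \/ (a2.1 = 0 \/ a2.2 = 0) by tauto.
  exact: inFrob_axis.
have := inFrob_axis w mz_gt0 a2N a2_neq0 a1N (spans1_sym span) axis2.
rewrite [((a2 : zring m%:Z) - 1) * _]mulrC => frob21.
by split=> [/inFrob_sym/frob21 | /frob21/inFrob_sym].
Qed.
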